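(* For every homogeneous polynomial $f(\mathbf{x}) \in \mathbb{C}[x_1,\ldots,x_n]$, we have $\mathrm{commRO}(f) \leq \mathrm{DPD}(f)$.
   Context: For $f \in \mathbb{C}[x_1,\ldots,x_n]$, the dimension of partial derivatives is $\mathrm{DPD}(f) := \dim_{\mathbb{C}} \mathrm{span}_{\mathbb{C}}\{\partial_{\mathbf{e}} f : \mathbf{e} \in \mathbb{N}^n\}$, where $\partial_{\mathbf{e}} f$ is the partial derivative of $f$ with respect to the monomial $x_1^{e_1}\cdots x_n^{e_n}$ (so $\mathbf{e}=\mathbf{0}$ gives $f$ itself). A read-once oblivious ABP (ROABP) of width $w$ computing an $n$-variate polynomial $f$ of individual degree at most $d$ consists of a permutation $\sigma$ of $[n]$, matrices $A_{j,k} \in \mathbb{C}^{w\times w}$ for $j\in[n]$, $0\le k\le d$, and vectors $\mathbf{u},\mathbf{v}\in\mathbb{C}^w$ such that $f(\mathbf{x}) = \mathbf{u}^{T} M_{\sigma(1)}(x_{\sigma(1)}) \cdots M_{\sigma(n)}(x_{\sigma(n)}) \mathbf{v}$, where $M_j(x_j) = \sum_{k=0}^{d} A_{j,k} x_j^k$. The $A_{j,k}$ are its coefficient matrices. A commutative ROABP is an ROABP whose coefficient matrices all pairwise commute. $\mathrm{commRO}(f)$ denotes the smallest $w$ such that some width-$w$ commutative ROABP computes $f$. *)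

From HB Require Import structures.
From mathcomp Require Import all_boot all_order all_algebra.
From mathcomp Require Import reals.
From mathcomp Require Import fingroup perm complex.
From mathcomp Require Import mpoly.
From Stdlib Require Import ClassicalEpsilon.

Set Implicit Arguments.
Unset Strict Implicit.
Unset Printing Implicit Defensive.

Import Order.TTheory GRing.Theory Num.Theory.
Local Open Scope ring_scope.

Definition Cx (R : realType) : fieldType := complex R.

(* Least natural number satisfying P, or 0 if there is none. *)
Definition natmin (P : nat -> Prop) : nat :=
  let Pb := fun k => if excluded_middle_informative (P k) then true else false in
  match excluded_middle_informative (exists k, Pb k) with
  | left h => ex_minn h
  | right _ => 0%N
  end.

Section Defs.
Variables (F : fieldType) (n : nat).
Implicit Types (f g : {mpoly F[n]}).

Definition in_span (b : seq {mpoly F[n]}) (v : {mpoly F[n]}) : Prop :=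
  exists c : 'I_(size b) -> F, v = \sum_(i < size b) c i *: b`_i.

Definition lin_indep (b : seq {mpoly F[n]}) : Prop :=
  forall c : 'I_(size b) -> F,
    \sum_(i < size b) c i *: b`_i = 0 -> forall i, c i = 0.

Definition pderiv (e : 'X_{1..n}) f : {mpoly F[n]} := mderivm e f.

Definition is_pd_basis f (b : seq {mpoly F[n]}) : Prop :=
  [/\ lin_indep b,
      forall i : 'I_(size b), exists (s : seq (multinom n)) (c : 'I_(size s) -> F),
           b`_i = \sum_(j < size s) c j *: pderiv (nth 0%MM s j) f
    & forall e : 'X_{1..n}, in_span b (pderiv e f)].

Definition DPD f : nat := natmin (fun d => exists b, size b = d /\ is_pd_basis f b).

Definition roabp_layer (w d : nat) (A : 'I_n -> 'I_d.+1 -> 'M[F]_w) (j : 'I_n)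
  : 'M[{mpoly F[n]}]_w :=
  \matrix_(a, b) \sum_(k < d.+1) (A j k a b)%:MP * 'X_j ^+ k.

(* The polynomial u^T M_{s(1)}(x_{s(1)}) ... M_{s(n)}(x_{s(n)}) v *)
Definition roabp_poly (w d : nat) (s : 'S_n) (A : 'I_n -> 'I_d.+1 -> 'M[F]_w)
  (u v : 'cV[F]_w) : {mpoly F[n]} :=
  ((map_mx (fun c => c%:MP) u)^T
     *m foldr (fun M acc => M *m acc) 1%:M
          [seq roabp_layer A (s j) | j <- enum 'I_n]
     *m map_mx (fun c => c%:MP) v) ord0 ord0.

Definition comm_roabp_computes f (w : nat) : Prop :=
  exists (d : nat) (s : 'S_n) (A : 'I_n -> 'I_d.+1 -> 'M[F]_w) (u v : 'cV[F]_w),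
    (forall j k j' k', A j k *m A j' k' = A j' k' *m A j k) /\
    roabp_poly s A u v = f.

Definition commRO f : nat := natmin (comm_roabp_computes f).

End Defs.

From HB Require Import structures.
From mathcomp Require Import all_boot all_order all_algebra.
From mathcomp Require Import reals complex mpoly.
From mathcomp Require Import fingroup perm ring.
From Stdlib Require Import ClassicalEpsilon.

(* The partial derivatives of f span a space V of dimension DPD f which every
   derivation d/dx_j maps into itself; in a basis of V these derivations act by
   pairwise commuting matrices D_j.  Taylor's formula (characteristic 0),
   applied one variable at a time, gives f = sum_e x^e/e! (d^e f)(0), and
   (d^e f)(0) = u^T D_1^e_1 ... D_n^e_n v, where u lists the constant terms of
   the basis and v holds the coordinates of f.  So the layers
   M_j(x_j) = sum_k D_j^k x_j^k / k!, truncated at the degree of f, form a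
   commutative ROABP of width DPD f. *)

Set Implicit Arguments.
Unset Strict Implicit.
Unset Printing Implicit Defensive.
Import GRing.Theory Num.Theory.
Local Open Scope ring_scope.

Lemma natminP (Q : nat -> Prop) k : Q k -> Q (natmin Q) /\ (natmin Q <= k)%N.
Proof.
move=> Qk; rewrite /natmin; case: excluded_middle_informative => [exQ|nexQ]; last first.
  by exfalso; apply: nexQ; exists k; case: excluded_middle_informative.
case: ex_minnP => m Qm min_m; split.
  by move: Qm; case: excluded_middle_informative.
by apply: min_m; case: excluded_middle_informative.
Qed.

Section Span.
Variables (F : fieldType) (n : nat).
Implicit Types (b : seq {mpoly F[n]}) (x y : {mpoly F[n]}).

Lemma in_span0 b : in_span b 0.
Proof. by exists (fun=> 0); rewrite big1 // => i _; rewrite scale0r. Qed.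

Lemma in_spanD b x y : in_span b x -> in_span b y -> in_span b (x + y).
Proof.
move=> [c1 ->] [c2 ->]; exists (fun i => c1 i + c2 i).
by rewrite -big_split; apply: eq_bigr => i _; rewrite scalerDl.
Qed.

Lemma in_spanZ b a x : in_span b x -> in_span b (a *: x).
Proof.
move=> [c ->]; exists (fun i => a * c i).
by rewrite scaler_sumr; apply: eq_bigr => i _; rewrite scalerA.
Qed.

Lemma in_span_sum b (I : Type) (r : seq I) (P : pred I) (G : I -> {mpoly F[n]}) :
  (forall i, P i -> in_span b (G i)) -> in_span b (\sum_(i <- r | P i) G i).
Proof.
move=> spanG; elim/big_rec: _ => [|i x Pi]; first exact: in_span0.
exact: in_spanD (spanG _ Pi).
Qed.

Lemma in_span_nth b (i : 'I_(size b)) : in_span b b`_i.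
Proof.
exists (fun j => (j == i)%:R); rewrite (bigD1 i) //= eqxx scale1r big1 ?addr0 //.
by move=> j /negbTE ->; rewrite scale0r.
Qed.

Lemma in_span_cons b x y : in_span b y -> in_span (x :: b) y.
Proof.
move=> [c ->]; exists (fun j => if unlift ord0 j is Some k then c k else 0).
rewrite big_ord_recl unlift_none scale0r add0r.
by apply: eq_bigr => i _; rewrite liftK.
Qed.

Lemma lin_indep_cons b x : lin_indep b -> ~ in_span b x -> lin_indep (x :: b).
Proof.
move=> indep_b xNspan c; rewrite big_ord_recl /= => c_rel.
have c0 : c ord0 = 0.
  apply/eqP/negPn/negP => c0_neq0; apply: xNspan.
  exists (fun i => - (c ord0)^-1 * c (lift ord0 i)).
  apply: (@scalerI _ _ (c ord0)) => //.
  move/eqP: c_rel; rewrite addr_eq0 => /eqP ->.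
  rewrite scaler_sumr -sumrN; apply: eq_bigr => i _.
  by rewrite scalerA mulrA mulrN mulfV // mulN1r scaleNr.
move: c_rel; rewrite c0 scale0r add0r => /(indep_b (fun i => c (lift ord0 i))) c_lift i.
by case: (unliftP ord0 i) => [j ->|->].
Qed.

Lemma indep_spanning_family (S : seq {mpoly F[n]}) : exists b,
  [/\ lin_indep b, forall i : 'I_(size b), b`_i \in S & {in S, forall x, in_span b x}].
Proof.
elim: S => [|x S [b [indep_b bS Sb]]].
  by exists [::]; split => // [c _ []|[]].
have [xb|xNb] := classic (in_span b x).
  exists b; split => // [i|y]; first by rewrite inE bS orbT.
  by rewrite inE => /predU1P [->|/Sb].
exists (x :: b); split; first exact: lin_indep_cons.
  by move=> i; case: (unliftP ord0 i) => [j ->|->]; rewrite inE ?eqxx // bS orbT.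
move=> y; rewrite inE => /predU1P [->|/Sb]; last exact: in_span_cons.
exact: (in_span_nth (ord0 : 'I_(size (x :: b)))).
Qed.

End Span.

Lemma mnm_le_mdeg n (m : 'X_{1..n}) i : (m i <= mdeg m)%N.
Proof. by rewrite mdegE (bigD1 i) //= leq_addr. Qed.

Lemma lem_mulU1 n j k (m : 'X_{1..n}) : (U_(j) *+ k <= m)%MM = (k <= m j)%N.
Proof.
apply/mnm_lepP/idP => [/(_ j)|le_k i]; first by rewrite mulmnE mnm1E eqxx mul1n.
by rewrite mulmnE mnm1E; case: eqP => [<-|]; rewrite ?mul1n.
Qed.

Section MpolyFacts.
Variables (R : nzRingType) (n : nat).
Implicit Types (p q : {mpoly R[n]}) (m e : 'X_{1..n}).

Lemma msize_leP p d : reflect (forall m, p@_m != 0 -> (mdeg m < d)%N) (msize p <= d)%N.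
Proof.
rewrite msizeE; apply: (iffP (bigmax_leqP_seq _ xpredT _ _)) => lt_d m.
  by rewrite -mcoeff_msupp => /lt_d; apply.
by rewrite mcoeff_msupp => /lt_d.
Qed.

Lemma msizeD_le p q : (msize (p + q) <= maxn (msize p) (msize q))%N.
Proof.
apply/msize_leP => m; rewrite mcoeffD leq_max.
have [pm0|] := eqVneq p@_m 0; last first.
  by rewrite -mcoeff_msupp => /msize_mdeg_lt ->.
by rewrite pm0 add0r -mcoeff_msupp => /msize_mdeg_lt ->; rewrite orbT.
Qed.

Lemma msize_sum_le (I : Type) (r : seq I) (P : pred I) (G : I -> {mpoly R[n]}) d :
  (forall i, P i -> msize (G i) <= d)%N -> (msize (\sum_(i <- r | P i) G i) <= d)%N.
Proof.
move=> le_d; elim/big_rec: _ => [|i p Pi le_p]; first by rewrite msize0.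
by rewrite (leq_trans (msizeD_le _ _)) // geq_max le_d.
Qed.

Lemma msize_mderivm_le m p : (msize (p^`M[m]) <= msize p)%N.
Proof.
apply/msize_leP => e; rewrite mcoeff_mderivm.
have [->|] := eqVneq p@_(m + e) 0; first by rewrite mul0rn eqxx.
rewrite -mcoeff_msupp => /msize_mdeg_lt lt_p _.
by rewrite (leq_ltn_trans _ lt_p) // mdegD leq_addl.
Qed.

Lemma mderivm_eq0 m p : (msize p <= mdeg m)%N -> p^`M[m] = 0.
Proof.
move=> le_p; apply/mpolyP => e; rewrite mcoeff_mderivm mcoeff0.
suff /memN_msupp_eq0 -> : (m + e)%MM \notin msupp p by rewrite mul0rn.
by apply: msize_mdeg_ge; rewrite mdegD (leq_trans le_p) ?leq_addr.
Qed.

Lemma mcoeff_mulX p m e :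
  (p * 'X_[m])@_e = if (m <= e)%MM then p@_(e - m) else 0.
Proof.
case: ifPn => [le_me|Nle_me]; first by rewrite -{1}(submK le_me) addmC mcoeffMX.
rewrite {1}[p]mpolyE mulr_suml raddf_sum big1 // => k _.
rewrite /= -scalerAl -mpolyXD mcoeffZ mcoeffX.
case: eqP => [km_e|_]; last by rewrite mulr0.
by rewrite -km_e lem_addl in Nle_me.
Qed.

Lemma mcoeff_mderivmU1 p j e :
  (p^`M[U_(j) *+ e j])@_(e - U_(j) *+ e j) = p@_e *+ (e j)`!.
Proof.
rewrite mcoeff_mderivm addmC submK ?lem_mulU1 // (bigD1 j) //=.
rewrite big1 => [|i /negbTE ne_ij].
  by rewrite mulmnE mnm1E eqxx mul1n ffactnn muln1.
by rewrite mulmnE mnm1E eq_sym ne_ij ffactn0.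
Qed.

End MpolyFacts.

Section PartialDerivativeBasis.
Variables (F : fieldType) (n : nat).

Lemma pd_basis_exists (f : {mpoly F[n]}) : exists b, is_pd_basis f b.
Proof.
have [b [indep_b bS Sb]] :=
  indep_spanning_family [seq pderiv (val e) f | e : 'X_{1..n < msize f}].
exists b; split => // [i|e].
  have /imageP [e _ ->] := bS i.
  by exists [:: val e], (fun _ => 1); rewrite big_ord1 scale1r.
have [lt_e|le_e] := ltnP (mdeg e) (msize f); last first.
  by rewrite /pderiv mderivm_eq0 //; apply: in_span0.
apply: Sb; have -> : e = val (Sub e lt_e : 'X_{1..n < msize f}) by [].
exact: (image_f (fun e : 'X_{1..n < msize f} => pderiv (val e) f)).
Qed.

Lemma DPD_basis (f : {mpoly F[n]}) : exists b, size b = DPD f /\ is_pd_basis f b.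
Proof.
have [b fb] := pd_basis_exists f.
exact: (natminP (Q := fun d => exists b, size b = d /\ is_pd_basis f b)
          (ex_intro _ b (conj erefl fb))).1.
Qed.

End PartialDerivativeBasis.

Section Taylor.
Variables (F : fieldType) (n : nat).
Implicit Types (p : {mpoly F[n]}) (l : seq 'I_n) (e : 'X_{1..n}).

Definition mnm_within l e := [forall i, (e i != 0)%N ==> (i \in l)].

Definition mrestrict l p : {mpoly F[n]} :=
  \sum_(e <- msupp p | mnm_within l e) p@_e *: 'X_[e].

Lemma mcoeff_mrestrict l p e :
  (mrestrict l p)@_e = if mnm_within l e then p@_e else 0.
Proof.
rewrite raddf_sum big_mkcond /=.
have [e_supp|eNsupp] := boolP (e \in msupp p).
  rewrite (bigD1_seq e) ?msupp_uniq //= big1 => [|m ne_me].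
    by rewrite mcoeffZ mcoeffX eqxx mulr1 addr0.
  by case: ifP => // _; rewrite mcoeffZ mcoeffX (negbTE ne_me) mulr0.
rewrite big1_seq => [|m /andP[_ m_supp]]; first by rewrite memN_msupp_eq0 ?if_same.
case: ifP => // _; rewrite mcoeffZ mcoeffX.
by case: eqP m_supp => [->|_]; rewrite ?(negbTE eNsupp) ?mulr0.
Qed.

Lemma mnm_within_nil e : mnm_within [::] e = (e == 0%MM).
Proof.
apply/forallP/eqP => [within_e|-> i]; last by rewrite mnm0E.
by apply/mnmP => i; rewrite mnm0E; have := within_e i; case: (e i).
Qed.

Lemma mrestrict_nil p : mrestrict [::] p = (p@_0)%:MP.
Proof.
apply/mpolyP => e; rewrite mcoeff_mrestrict mcoeffC mnm_within_nil.
by case: eqP => [->|]; rewrite ?mulr1 ?mulr0.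
Qed.

Lemma mrestrict_enum p : mrestrict (enum 'I_n) p = p.
Proof.
apply/mpolyP => e; rewrite mcoeff_mrestrict.
by have -> : mnm_within (enum 'I_n) e by apply/forallP => i; rewrite mem_enum implybT.
Qed.

Lemma mnm_within_subU l j e k : j \notin l ->
  mnm_within l (e - U_(j) *+ k)%MM = (e j <= k)%N && mnm_within (j :: l) e.
Proof.
move=> jNl; apply/forallP/andP => [within_e|[le_k within_e] i].
  split.
    have := within_e j; rewrite mnmBE mulmnE mnm1E eqxx mul1n subn_eq0.
    by rewrite (negbTE jNl) implybF negbK.
  apply/forallP => i; rewrite inE; have [->|ne_ij] := eqVneq i j.
    by rewrite implybT.
  have := within_e i; rewrite mnmBE mulmnE mnm1E (eq_sym j) (negbTE ne_ij).
  by rewrite mul0n subn0.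
rewrite mnmBE mulmnE mnm1E; have [<-|ne_ji] := eqVneq j i.
  by rewrite mul1n subn_eq0 le_k.
by have := forallP within_e i; rewrite inE (eq_sym i) (negbTE ne_ji) mul0n subn0.
Qed.

Hypothesis charF : [pchar F] =i pred0.

Lemma natf_fact_neq0 k : (k`!)%:R != 0 :> F.
Proof. by rewrite (pcharf0P F).1 // -lt0n fact_gt0. Qed.

Lemma mrestrict_taylor l j p d : j \notin l -> (msize p <= d.+1)%N ->
  mrestrict (j :: l) p =
  \sum_(k < d.+1) ((k`!%:R)^-1 *: mrestrict l (p^`M[U_(j) *+ k])) * 'X_j ^+ k.
Proof.
move=> jNl le_p; apply/mpolyP => e; rewrite mcoeff_mrestrict raddf_sum /=.
under eq_bigr => k _ do rewrite mpolyXn mcoeff_mulX lem_mulU1 mcoeffZ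
  mcoeff_mrestrict (mnm_within_subU _ _ jNl).
have [within_e|_] := boolP (mnm_within (j :: l) e); last first.
  by rewrite big1 // => k _; rewrite andbF mulr0 if_same.
have [le_ej|lt_ej] := leqP (e j) d; last first.
  rewrite big1 => [|k _]; last first.
    by rewrite (leqNgt (e j)) (leq_trans (ltn_ord k) lt_ej) mulr0 if_same.
  have lt_deg := elimT (msize_leP _ _) le_p.
  apply/eqP; apply: contraLR lt_ej => /lt_deg lt_e; rewrite -leqNgt -ltnS.
  exact: leq_ltn_trans (mnm_le_mdeg _ _) lt_e.
rewrite (bigD1 (Ordinal (le_ej : (e j < d.+1)%N))) //= big1 => [|k ne_k].
  rewrite leqnn /= mcoeff_mderivmU1 -[p@_e *+ _]mulr_natr mulrCA.
  by rewrite mulVf ?natf_fact_neq0 // mulr1 addr0.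
have ne_kej : (k : nat) != e j by apply: contraNneq ne_k => eq_k; apply/eqP/val_inj.
by case: leqP => // le_k; rewrite (leqNgt (e j)) ltn_neqAle ne_kej le_k mulr0.
Qed.

End Taylor.

Section CommutativeROABP.
Variables (F : fieldType) (n : nat).
Hypothesis charF : [pchar F] =i pred0.
Variables (f : {mpoly F[n]}) (b : seq {mpoly F[n]}).
Hypothesis fb : is_pd_basis f b.
Local Notation m := (size b).
Local Notation liftC := (map_mx (fun c : F => c%:MP)).

Definition bcomb (c : 'cV[F]_m) : {mpoly F[n]} := \sum_k c k 0 *: b`_k.

Lemma bcomb_inj : injective bcomb.
Proof.
case: fb => indep_b _ _ c1 c2 eq_c; apply/matrixP => k i; rewrite ord1.
apply/eqP; rewrite -subr_eq0; apply/eqP.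
apply: (indep_b (fun k => c1 k 0 - c2 k 0)).
under eq_bigr do rewrite scalerBl.
by rewrite sumrB; apply/eqP; rewrite subr_eq0; apply/eqP.
Qed.

Lemma in_span_bcomb x : in_span b x -> exists c, x = bcomb c.
Proof. by move=> [c ->]; exists (\col_k c k); apply: eq_bigr => k _; rewrite mxE. Qed.

Lemma msize_bcomb c : (msize (bcomb c) <= msize f)%N.
Proof.
apply: msize_sum_le => a _; apply: leq_trans (msizeZ_le _ _) _.
case: fb => _ b_pd _; have [s [d ->]] := b_pd a.
by apply: msize_sum_le => i _; apply: leq_trans (msizeZ_le _ _) (msize_mderivm_le _ _).
Qed.

Lemma mderiv_nth_bcomb (j : 'I_n) (a : 'I_m) : exists c, (b`_a)^`M(j) = bcomb c.
Proof.
case: fb => _ b_pd pd_b; have [s [d ->]] := b_pd a.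
apply: in_span_bcomb; rewrite raddf_sum /=; apply: in_span_sum => i _.
by rewrite mderivZ -mderivmU1m /pderiv -mderivmDm; apply/in_spanZ/pd_b.
Qed.

Definition dcoord (j : 'I_n) (a : 'I_m) : 'cV[F]_m :=
  proj1_sig (constructive_indefinite_description _ (mderiv_nth_bcomb j a)).

Lemma dcoordP j (a : 'I_m) : (b`_a)^`M(j) = bcomb (dcoord j a).
Proof. by rewrite /dcoord; case: constructive_indefinite_description. Qed.

Definition dmx (j : 'I_n) : 'M[F]_m := \matrix_(k, a) dcoord j a k 0.

Lemma mderiv_bcomb j c : (bcomb c)^`M(j) = bcomb (dmx j *m c).
Proof.
rewrite raddf_sum /=.
under eq_bigr do rewrite mderivZ dcoordP /bcomb scaler_sumr.
rewrite exchange_big /=; apply: eq_bigr => k _; rewrite !mxE scaler_suml.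
by apply: eq_bigr => a _; rewrite scalerA mxE mulrC.
Qed.

Lemma dmx_comm j j' : dmx j *m dmx j' = dmx j' *m dmx j.
Proof.
have col_eq a : col a (dmx j *m dmx j') = col a (dmx j' *m dmx j).
  by rewrite !colE; apply: bcomb_inj; rewrite -!mulmxA -!mderiv_bcomb mderiv_comm.
by apply/matrixP => k a; have /matrixP/(_ k 0) := col_eq a; rewrite !mxE.
Qed.

Definition taylor_mx (j : 'I_n) (k : 'I_(msize f).+1) : 'M[F]_m :=
  (k`!%:R)^-1 *: dmx j ^+ k.

Lemma taylor_mx_comm j k j' k' :
  taylor_mx j k *m taylor_mx j' k' = taylor_mx j' k' *m taylor_mx j k.
Proof.
rewrite /taylor_mx -!scalemxAl -!scalemxAr !scalerA mulrC; congr (_ *: _).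
rewrite !mulmxE; apply/commrX/commr_sym/commrX.
by rewrite /GRing.comm -!mulmxE dmx_comm.
Qed.

Definition coef0_row (e : 'X_{1..n}) : 'rV[F]_m := \row_k ((b`_k)^`M[e])@_0.

Lemma coef0_row_mul e c : (coef0_row e *m c) 0 0 = ((bcomb c)^`M[e])@_0.
Proof.
rewrite !mxE /bcomb !raddf_sum /=; apply: eq_bigr => k _.
by rewrite mderivmZ mcoeffZ mxE mulrC.
Qed.

Lemma coef0_row_dmx e j : coef0_row e *m dmx j = coef0_row (U_(j) + e).
Proof.
apply/rowP => a; rewrite [RHS]mxE mderivmDm mderivmU1m dcoordP -coef0_row_mul.
by rewrite !mxE; apply: eq_bigr => k _; rewrite !mxE.
Qed.

Lemma coef0_row_dmxX e j k : coef0_row e *m dmx j ^+ k = coef0_row (U_(j) *+ k + e).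
Proof.
elim: k => [|k IHk]; first by rewrite expr0 mulmx1 mulm0n add0m.
by rewrite exprSr -mulmxE mulmxA IHk coef0_row_dmx mulmS addmA.
Qed.

Lemma coef0_row_layer e j :
  liftC (coef0_row e) *m roabp_layer taylor_mx j =
  \sum_(k < (msize f).+1)
     ((k`!%:R)^-1 *: 'X_j ^+ k) *: liftC (coef0_row (U_(j) *+ k + e)).
Proof.
apply/matrixP => i a; rewrite !mxE summxE.
under eq_bigr do rewrite !mxE mulr_sumr.
rewrite exchange_big /=; apply: eq_bigr => k _.
rewrite -coef0_row_dmxX !mxE rmorph_sum mulr_sumr; apply: eq_bigr => t _.
rewrite !mxE -!mul_mpolyC !rmorphM /=.
ring.
Qed.

Lemma coef0_row_layers_mul (l : seq 'I_n) : uniq l -> forall e c,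
  (liftC (coef0_row e)
     *m foldr (fun M acc => M *m acc) 1%:M [seq roabp_layer taylor_mx j | j <- l]
     *m liftC c) 0 0
  = mrestrict l ((bcomb c)^`M[e]).
Proof.
elim: l => [_|j l IHl /andP[jNl uniq_l]] e c /=.
  rewrite mulmx1 mrestrict_nil -coef0_row_mul !mxE rmorph_sum.
  by apply: eq_bigr => k _; rewrite !mxE rmorphM.
rewrite mulmxA coef0_row_layer !mulmx_suml summxE.
rewrite (mrestrict_taylor charF (d := msize f) jNl); last first.
  exact/leqW/(leq_trans (msize_mderivm_le _ _) (msize_bcomb _)).
apply: eq_bigr => k _; rewrite -!scalemxAl mxE IHl // addmC mderivmDm.
by rewrite -!scalerAl mulrC.
Qed.

Lemma comm_roabp_computes_basis : comm_roabp_computes f m.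
Proof.
case: fb => _ _ pd_b; have [c fc] := in_span_bcomb (pd_b 0%MM).
rewrite /pderiv mderivm0m in fc.
exists (msize f), 1%g, taylor_mx, (coef0_row 0)^T, c.
split; first exact: taylor_mx_comm.
rewrite /roabp_poly map_trmx trmxK.
under eq_map do rewrite perm1.
by rewrite coef0_row_layers_mul ?enum_uniq // mderivm0m mrestrict_enum -fc.
Qed.

End CommutativeROABP.

Lemma comm_roabp_computes_DPD (F : fieldType) (n : nat) (f : {mpoly F[n]}) :
  [pchar F] =i pred0 -> comm_roabp_computes f (DPD f).
Proof.
move=> charF; have [b [<- fb]] := DPD_basis f.
exact: (comm_roabp_computes_basis charF fb).
Qed.

Unset Implicit Arguments.

Theorem theorem1p4 (R : realType) (n : nat) (f : {mpoly (Cx R)[n]}) :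
  (exists deg : nat, f \is deg.-homog) ->
  (exists w, comm_roabp_computes f w) /\ (commRO f <= DPD f)%N.
Proof.
move=> _; have computes_f := comm_roabp_computes_DPD f (@pchar_num (complex R)).
by split; [exists (DPD f) | have [] := natminP computes_f].
Qed.
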